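(* Let $(S;A)$ be sanitized, let $(T;E) = \mathit{ker}(S;A)$, and let $\alpha = \exists x_1\ldots x_k.(t \bowtie u)$ with $\mathrm{bv}(\alpha) \cap (\mathrm{vars}(S) \cup \mathrm{vars}(A)) = \emptyset$. Suppose there is a substitution $\mu$ with $\mathrm{dom}(\mu) = \mathrm{bv}(\alpha)$ such that: 1. $T \vdash_{dy} \mu(x)$ for all $x \in \mathrm{dom}(\mu)$; 2. $\mathrm{pos}_x(r) \subseteq \mathbb{A}(T \cup \mathrm{dom}(\mu), r)$ for all $x \in \mathrm{dom}(\mu)$ and $r \in \{t,u\}$; 3. $(T;E) \vdash_{eq} \mu(t) \bowtie \mu(u)$. Then there is a substitution $\nu$ with $\mathrm{dom}(\nu) = \mathrm{bv}(\alpha)$ satisfying the same three conditions (with $\nu$ in place of $\mu$) which is $M$-bounded, i.e. $|\mathrm{st}(\nu(x))| \le M$ for every $x \in \mathrm{dom}(\nu)$, where $M = |\mathrm{st}(S) \cup \mathrm{st}(A \cup \{\alpha\})|$.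
   Context: $\mathrm{st}(\cdot)$ denotes the set of subterms of a term, or of the terms occurring in a set of terms or assertions. Terms. Fix names $\mathscr{N}$, variables $\mathscr{V}$ with quantification variables $\mathscr{V}_q \subseteq \mathscr{V}$, and keys $\mathscr{K} \subseteq \mathscr{N}$ with inverses. Terms: $t ::= x \mid m \mid (t,u) \mid \{t\}_k$ with $k \in \mathscr{K} \cup \mathscr{V}$. $X \vdash_{dy} t$ means derivable by the Dolev–Yao rules: ax ($t \in X$); fst/snd; pair; dec (from $\{t\}_k$ and $k^{-1}$ get $t$); enc. Positions. $\mathrm{Pos}(m) = \{\varepsilon\}$ for names and variables, and $\mathrm{Pos}(\mathsf{f}(t,u)) = \{\varepsilon\} \cup 0\,\mathrm{Pos}(t) \cup 1\,\mathrm{Pos}(u)$. $t|_p$ is the subterm at $p$, and $\mathrm{pos}_x(t) = \{p : t|_p = x\}$. With $\mathbb{Q}_p = \{\varepsilon\} \cup \{qi \in \mathrm{Pos}(t) : q \text{ a proper prefix of } p\}$, $\mathbb{A}(S,t) = \{p : S \vdash_{dy} t|_q \ \forall q \in \mathbb{Q}_p\}$. Assertions. An assertion is $\exists x_1\ldots x_k.(t \bowtie u)$ with $x_i \in \mathscr{V}_q$. Its positions are $0^k0p$ and $0^k1p$, and its abstractable positions w.r.t. $S$ are computed with $\mathbb{A}(S \cup \{x_1,\ldots,x_k\}, \cdot)$ on each side. $\mathrm{fv}$ and $\mathrm{bv}$ are free and bound variables; $\mathrm{pubs}(\alpha)$ is the set of maximal subterms of $\alpha$ without $\mathscr{V}_q$-variables.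 Proof rules for $S; A \vdash \alpha$: - ax; eq ($t \bowtie t$ if $S \vdash_{dy} t$); sym; - cons: from $t_0 \bowtie u_0$ and $t_1 \bowtie u_1$ get $\mathsf{f}(t_0,t_1) \bowtie \mathsf{f}(u_0,u_1)$; - $\mathsf{proj}_i$: the inverse of cons, allowed if $S \vdash_{dy} t_0, t_1, u_0, u_1$; - trans: from $t_1 \bowtie t_2, \ldots, t_k \bowtie t_{k+1}$ get $t_1 \bowtie t_{k+1}$; - $\exists$intro: from $\alpha[\mathrm{pos}_x(\alpha) \mapsto w]$ with $S \vdash_{dy} w$ and $\mathrm{pos}_x(\alpha) \subseteq \mathbb{A}(S \cup \{x\}, \alpha)$ get $\exists x.\alpha$; - $\exists$elim: from $\exists x.\alpha$ and $S \cup \{x\}; A \cup \{\alpha\} \vdash \gamma$ get $\gamma$, with $x$ not free in $S, A, \gamma$. $\vdash_{eq}$ denotes derivability without the two $\exists$ rules. Sanitized and kernel. $(S;A)$ is sanitized if $(\mathrm{vars}(S) \cup \mathrm{fv}(A)) \cap \mathscr{V}_q = \emptyset$ and $\mathrm{pubs}(\beta) \subseteq S$ for all $\beta \in A$. $\mathit{ker}(S;A) = (S \cup \mathrm{bv}(A);\ \{t \bowtie u : \exists\vec{x}.(t \bowtie u) \in A\})$. Standing assumptions: no variable occurs both free and bound in an assertion; the kernel $(T;E)$ is consistent, i.e. some ground substitution $\lambda$ has $\lambda(t) = \lambda(u)$ for all $t \bowtie u \in E$. *)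

(* Terms, Dolev-Yao derivability, positions, assertions and the
   equality proof system |-_eq of the paper, for a fixed signature given by
   - qv    : nat -> bool   (which variables are quantification variables V_q)
   - iskey : nat -> bool   (which names are keys, K subset N)
   - kinv  : nat -> nat    (inverse of a key name)                           *)
From Stdlib Require Import List Bool Arith.
Import ListNotations.

Inductive term : Type :=
| Var  : nat -> term
| Nm   : nat -> term
| Pair : term -> term -> term
| Enc  : term -> term -> term.  (* {t}_k, key at position 1 *)

Definition term_eq_dec : forall t u : term, {t = u} + {t <> u}.
Proof. decide equality; apply Nat.eq_dec. Defined.

Fixpoint vars (t : term) : list nat :=
  match t with
  | Var x => [x]
  | Nm _ => []
  | Pair a b | Enc a b => vars a ++ vars b
  end.

Fixpoint st (t : term) : list term :=
  match t with
  | Var _ | Nm _ => [t]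
  | Pair a b | Enc a b => t :: st a ++ st b
  end.

Definition card (l : list term) : nat := length (nodup term_eq_dec l).

Fixpoint app (s : nat -> term) (t : term) : term :=
  match t with
  | Var x => s x
  | Nm m => Nm m
  | Pair a b => Pair (app s a) (app s b)
  | Enc a b => Enc (app s a) (app s b)
  end.

Definition subst_on (dom : list nat) (s : nat -> term) : term -> term :=
  app (fun x => if in_dec Nat.eq_dec x dom then s x else Var x).

(* Positions: sequences over {0,1}. *)
Definition position := list nat.

Fixpoint subterm_at (t : term) (p : position) : option term :=
  match p with
  | [] => Some t
  | i :: p' =>
      match t with
      | Pair a b | Enc a b =>
          if Nat.eqb i 0 then subterm_at a p'
          else if Nat.eqb i 1 then subterm_at b p' else None
      | _ => None
      end
  end.

Definition in_Pos (t : term) (p : position) : Prop := subterm_at t p <> None.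

Definition in_pos_var (x : nat) (t : term) (p : position) : Prop :=
  subterm_at t p = Some (Var x).

Section Signature.
Variable qv : nat -> bool.
Variable iskey : nat -> bool.
Variable kinv : nat -> nat.

Definition is_key_term (k : term) : Prop :=
  match k with
  | Nm n => iskey n = true
  | Var _ => True
  | _ => False
  end.

Fixpoint wf (t : term) : Prop :=
  match t with
  | Var _ | Nm _ => True
  | Pair a b => wf a /\ wf b
  | Enc a k => wf a /\ is_key_term k
  end.

(* inverse of a key term; a variable used as a key is its own inverse *)
Definition key_inv (k : term) : option term :=
  match k with
  | Nm n => if iskey n then Some (Nm (kinv n)) else None
  | Var x => Some (Var x)
  | _ => None
  end.

Inductive dy (X : list term) : term -> Prop :=
| dy_ax  : forall t, In t X -> dy X t
| dy_fst : forall t u, dy X (Pair t u) -> dy X t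
| dy_snd : forall t u, dy X (Pair t u) -> dy X u
| dy_pair : forall t u, dy X t -> dy X u -> dy X (Pair t u)
| dy_dec : forall t k k', dy X (Enc t k) -> key_inv k = Some k' -> dy X k' -> dy X t
| dy_enc : forall t k, dy X t -> dy X k -> is_key_term k -> dy X (Enc t k).

Definition in_Q (t : term) (p q : position) : Prop :=
  q = [] \/
  (exists q' i r, q = q' ++ [i] /\ in_Pos t q /\ r <> [] /\ p = q' ++ r).

Definition abstractable (X : list term) (t : term) (p : position) : Prop :=
  in_Pos t p /\
  forall q s, in_Q t p q -> subterm_at t q = Some s -> dy X s.

Record assertion : Type := Asrt { bnd : list nat; lhs : term; rhs : term }.

Definition avars (a : assertion) : list nat := bnd a ++ vars (lhs a) ++ vars (rhs a).
Definition fva (a : assertion) : list nat :=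
  filter (fun x => negb (if in_dec Nat.eq_dec x (bnd a) then true else false))
         (vars (lhs a) ++ vars (rhs a)).
Definition sta (a : assertion) : list term := st (lhs a) ++ st (rhs a).

Definition has_qvar (t : term) : bool := existsb qv (vars t).

Fixpoint pubs_t (t : term) : list term :=
  if has_qvar t then
    match t with
    | Pair a b | Enc a b => pubs_t a ++ pubs_t b
    | _ => []
    end
  else [t].

Definition pubs (a : assertion) : list term := pubs_t (lhs a) ++ pubs_t (rhs a).

Definition wf_assertion (a : assertion) : Prop :=
  (forall x, In x (bnd a) -> qv x = true) /\
  wf (lhs a) /\ wf (rhs a) /\
  (forall x, In x (bnd a) -> ~ In x (fva a)).

Definition sanitized (S : list term) (A : list assertion) : Prop :=
  (forall t x, In t S -> In x (vars t) -> qv x = false) /\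
  (forall b x, In b A -> In x (fva b) -> qv x = false) /\
  (forall b s, In b A -> In s (pubs b) -> In s S).

Definition kerT (S : list term) (A : list assertion) : list term :=
  S ++ map Var (flat_map bnd A).
Definition kerE (A : list assertion) : list (term * term) :=
  map (fun b => (lhs b, rhs b)) A.

Definition ground (t : term) : Prop := vars t = [].

Definition consistent (E : list (term * term)) : Prop :=
  exists lam : nat -> term,
    (forall x, ground (lam x) /\ wf (lam x)) /\
    (forall t u, In (t, u) E -> wf (app lam t) /\ app lam t = app lam u).

(* S;E |-_eq t |><| u : the proof system without the two exists rules
   (E contains only quantifier-free assertions). Binary trans generates
   exactly the k-ary trans rule. *)
Inductive eqd (X : list term) (E : list (term * term)) : term -> term -> Prop :=
| eqd_ax : forall t u, In (t, u) E -> eqd X E t u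
| eqd_eq : forall t, dy X t -> eqd X E t t
| eqd_sym : forall t u, eqd X E t u -> eqd X E u t
| eqd_cons_pair : forall t0 t1 u0 u1,
    eqd X E t0 u0 -> eqd X E t1 u1 -> eqd X E (Pair t0 t1) (Pair u0 u1)
| eqd_cons_enc : forall t0 t1 u0 u1,
    eqd X E t0 u0 -> eqd X E t1 u1 -> eqd X E (Enc t0 t1) (Enc u0 u1)
| eqd_proj0_pair : forall t0 t1 u0 u1,
    eqd X E (Pair t0 t1) (Pair u0 u1) ->
    dy X t0 -> dy X t1 -> dy X u0 -> dy X u1 -> eqd X E t0 u0
| eqd_proj1_pair : forall t0 t1 u0 u1,
    eqd X E (Pair t0 t1) (Pair u0 u1) ->
    dy X t0 -> dy X t1 -> dy X u0 -> dy X u1 -> eqd X E t1 u1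
| eqd_proj0_enc : forall t0 t1 u0 u1,
    eqd X E (Enc t0 t1) (Enc u0 u1) ->
    dy X t0 -> dy X t1 -> dy X u0 -> dy X u1 -> eqd X E t0 u0
| eqd_proj1_enc : forall t0 t1 u0 u1,
    eqd X E (Enc t0 t1) (Enc u0 u1) ->
    dy X t0 -> dy X t1 -> dy X u0 -> dy X u1 -> eqd X E t1 u1
| eqd_trans : forall t1 t2 t3, eqd X E t1 t2 -> eqd X E t2 t3 -> eqd X E t1 t3.

(* The three conditions on a substitution sigma with dom(sigma) = bv(alpha),
   w.r.t. (T;E) = ker(S;A); sigma(x) and sigma(t), sigma(u) are (well-formed) terms. *)
Definition good_witness (S : list term) (A : list assertion) (alpha : assertion)
  (sigma : nat -> term) : Prop :=
  let T := kerT S A in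
  let E := kerE A in
  let dom := bnd alpha in
  (forall x, In x dom -> wf (sigma x)) /\
  wf (subst_on dom sigma (lhs alpha)) /\ wf (subst_on dom sigma (rhs alpha)) /\
  (forall x, In x dom -> dy T (sigma x)) /\
  (forall x r p, In x dom -> (r = lhs alpha \/ r = rhs alpha) ->
             in_pos_var x r p -> abstractable (T ++ map Var dom) r p) /\
  eqd T E (subst_on dom sigma (lhs alpha)) (subst_on dom sigma (rhs alpha)).

End Signature.

Definition bound_M (S : list term) (A : list assertion) (alpha : assertion) : nat :=
  card (flat_map st S ++ flat_map sta (A ++ [alpha])).

From Pilot Require Import Defs.
From Stdlib Require Import List Bool Arith Lia Classical ClassicalEpsilon.
Import ListNotations.

(* Work in a term model of |-_eq over the kernel (T;E).  Let U be the set of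
   subterms of S, A and alpha, and B its T-derivable part.  The value of a term
   of B describes its |-_eq class through the pairs and ciphertexts of B in that
   class, recursively; the recursion is well founded because a unifier of E
   (consistency) gives all members of a class the same instance, hence the same
   size.  Outside B values are computed structurally.  This interpretation is
   sound for |-_eq and faithful on derivable terms.

   The small witness nu reads the value of each mu(x) back into a term,
   rebuilding a pair or ciphertext only where the value is that of a subterm of
   alpha containing bound variables, and otherwise taking a representative from
   B (or an atomic mu(y), which may be needed as a key).  Abstractability of the
   bound positions makes every side of alpha instantiated by nu have the value
   of the read-back of its mu-instance, so nu(t) and nu(u) have equal values and
   are |-_eq-equivalent.  Every subterm of nu(x) is in U, an atomic mu(y), or the
   read-back of a subterm r of alpha; sending it to itself, to y or to r is
   injective on terms free of bound variables, whence |st(nu(x))| <= |U| = M. *)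

Definition dec (P : Prop) : bool := if excluded_middle_informative P then true else false.

Lemma dec_spec P : dec P = true <-> P.
Proof.
  unfold dec; destruct (excluded_middle_informative P); split; auto; discriminate + contradiction.
Qed.

Lemma dec_iff P Q : (P <-> Q) -> dec P = dec Q.
Proof.
  unfold dec; destruct (excluded_middle_informative P), (excluded_middle_informative Q); tauto.
Qed.

Lemma find_ext {A} (f g : A -> bool) l : (forall x, f x = g x) -> find f l = find g l.
Proof. induction l; simpl; intros H; auto; rewrite H; destruct (g a); auto. Qed.

Lemma find_exists {A} (f : A -> bool) l x : In x l -> f x = true -> exists y, find f l = Some y.
Proof.
  intros Hx Hf; destruct (find f l) eqn:Hfd; eauto.
  exfalso; eapply find_none in Hfd; eauto; congruence.
Qed.

Lemma st_refl t : In t (st t).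
Proof. destruct t; simpl; auto. Qed.

Lemma st_trans a b c : In a (st b) -> In b (st c) -> In a (st c).
Proof.
  induction c; simpl; intros Hab [<-|Hbc]; auto; try contradiction.
  all: right; apply in_app_or in Hbc; apply in_or_app; intuition.
Qed.

Lemma st_pair_l a b : In a (st (Pair a b)).
Proof. simpl; right; apply in_or_app; left; apply st_refl. Qed.
Lemma st_pair_r a b : In b (st (Pair a b)).
Proof. simpl; right; apply in_or_app; right; apply st_refl. Qed.
Lemma st_enc_l a b : In a (st (Enc a b)).
Proof. simpl; right; apply in_or_app; left; apply st_refl. Qed.
Lemma st_enc_r a b : In b (st (Enc a b)).
Proof. simpl; right; apply in_or_app; right; apply st_refl. Qed.

Lemma vars_st s t x : In s (st t) -> In x (vars s) -> In x (vars t).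
Proof.
  induction t; simpl; intros [<-|Hs] Hx; auto; try contradiction.
  all: apply in_app_or in Hs; apply in_or_app; intuition.
Qed.

Lemma var_position x r : In x (vars r) -> exists p, in_pos_var x r p.
Proof.
  unfold in_pos_var; induction r; simpl; intros Hx; try contradiction.
  - destruct Hx as [<-|[]]; exists []; reflexivity.
  - apply in_app_or in Hx; destruct Hx as [Hx|Hx].
    + destruct (IHr1 Hx) as [p Hp]; exists (0 :: p); exact Hp.
    + destruct (IHr2 Hx) as [p Hp]; exists (1 :: p); exact Hp.
  - apply in_app_or in Hx; destruct Hx as [Hx|Hx].
    + destruct (IHr1 Hx) as [p Hp]; exists (0 :: p); exact Hp.
    + destruct (IHr2 Hx) as [p Hp]; exists (1 :: p); exact Hp.
Qed.

Lemma st_app s r' r : In r' (st r) -> In (Defs.app s r') (st (Defs.app s r)).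
Proof.
  induction r; simpl; intros H.
  1,2: destruct H as [<-|[]]; simpl; auto using st_refl.
  all: destruct H as [<-|H]; auto; right; apply in_app_or in H; apply in_or_app; intuition.
Qed.

Definition is_atom (t : term) : bool :=
  match t with Var _ | Nm _ => true | _ => false end.

Lemma st_atom k : is_atom k = true -> st k = [k].
Proof. destruct k; simpl; congruence. Qed.

Definition domfree (dom : list nat) (t : term) : Prop :=
  forall y, In y (vars t) -> ~ In y dom.

Lemma domfree_st dom s t : In s (st t) -> domfree dom t -> domfree dom s.
Proof. intros Hs Ht y Hy; apply Ht; eapply vars_st; eauto. Qed.

Lemma domfree_or_var dom r : domfree dom r \/ exists y, In y (vars r) /\ In y dom.
Proof.
  destruct (classic (exists y, In y (vars r) /\ In y dom)) as [|Hn]; auto.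
  left; intros y Hy Hd; apply Hn; eauto.
Qed.

Lemma subst_on_domfree dom s r : domfree dom r -> subst_on dom s r = r.
Proof.
  unfold subst_on; induction r; simpl; intros H.
  - destruct (in_dec Nat.eq_dec n dom); [exfalso; eapply H; simpl; eauto|reflexivity].
  - reflexivity.
  - rewrite IHr1, IHr2; auto; intros y Hy; apply H; apply in_or_app; auto.
  - rewrite IHr1, IHr2; auto; intros y Hy; apply H; apply in_or_app; auto.
Qed.

Lemma subst_on_var dom s x : In x dom -> subst_on dom s (Var x) = s x.
Proof. intros Hx; unfold subst_on; simpl; destruct (in_dec Nat.eq_dec x dom); tauto. Qed.

Section Signature.
Variable iskey : nat -> bool.
Variable kinv : nat -> nat.
Local Notation wf := (wf iskey).
Local Notation is_key := (is_key_term iskey).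

Lemma key_atom k : is_key k -> is_atom k = true.
Proof. destruct k; simpl; auto; contradiction. Qed.

Lemma key_wf k : is_key k -> wf k.
Proof. destruct k; simpl; auto; contradiction. Qed.

Lemma wf_st t s : wf t -> In s (st t) -> wf s.
Proof.
  induction t; simpl; intros Hw [<-|H]; auto; try contradiction.
  - destruct Hw; apply in_app_or in H; intuition.
  - destruct Hw as [Hw Hk]; apply in_app_or in H; destruct H as [H|H]; auto.
    apply IHt2; [apply key_wf, Hk|exact H].
Qed.

Local Notation dy := (dy iskey kinv).

(* Normal derivations: decomposition steps from [X] ([dy_an]) under composition
   steps ([dy_nf]). *)
Inductive dy_an (X : list term) : term -> Prop :=
| an_ax t : In t X -> dy_an X t
| an_fst t u : dy_an X (Pair t u) -> dy_an X t
| an_snd t u : dy_an X (Pair t u) -> dy_an X u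
| an_dec t k k' : dy_an X (Enc t k) -> key_inv iskey kinv k = Some k' -> dy_nf X k' -> dy_an X t
with dy_nf (X : list term) : term -> Prop :=
| nf_an t : dy_an X t -> dy_nf X t
| nf_pair t u : dy_nf X t -> dy_nf X u -> dy_nf X (Pair t u)
| nf_enc t k : dy_nf X t -> dy_nf X k -> is_key k -> dy_nf X (Enc t k).

Scheme dy_an_mut := Induction for dy_an Sort Prop
with dy_nf_mut := Induction for dy_nf Sort Prop.

Lemma dy_nf_dy X t : dy_nf X t -> dy X t.
Proof.
  apply (dy_nf_mut X (fun t _ => dy X t) (fun t _ => dy X t)); intros.
  - apply dy_ax; auto.
  - eapply dy_fst; eauto.
  - eapply dy_snd; eauto.
  - eapply dy_dec; eauto.
  - auto.
  - apply dy_pair; auto.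
  - apply dy_enc; auto.
Qed.

(* Normalisation: a projection or decryption of a synthesised pair or
   ciphertext just returns one of its components. *)
Lemma dy_dy_nf X t : dy X t -> dy_nf X t.
Proof.
  induction 1.
  - apply nf_an, an_ax; auto.
  - inversion IHdy; subst; auto; apply nf_an; eapply an_fst; eauto.
  - inversion IHdy; subst; auto; apply nf_an; eapply an_snd; eauto.
  - apply nf_pair; auto.
  - inversion IHdy1; subst; auto; apply nf_an; eapply an_dec; eauto.
  - apply nf_enc; auto.
Qed.

Lemma dy_an_st X t : dy_an X t -> In t (flat_map st X).
Proof.
  induction 1; [apply in_flat_map; exists t; split; auto using st_refl|..].
  all: apply in_flat_map in IHdy_an; destruct IHdy_an as [x [Hx Hs]].
  all: apply in_flat_map; exists x; split; auto; eapply st_trans; eauto.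
  - apply st_pair_l.
  - apply st_pair_r.
  - apply st_enc_l.
Qed.

Lemma dy_locality X s : dy X s ->
  In s (flat_map st X) \/
  (exists a b, s = Pair a b /\ dy X a /\ dy X b) \/
  (exists a b, s = Enc a b /\ dy X a /\ dy X b).
Proof.
  intros H; apply dy_dy_nf in H; inversion H; subst.
  - left; apply dy_an_st; auto.
  - right; left; exists t, u; auto using dy_nf_dy.
  - right; right; exists t, k; auto using dy_nf_dy.
Qed.

Lemma dy_vars X s x : dy X s -> In x (vars s) -> In x (flat_map vars X).
Proof.
  induction 1; simpl; intros Hx.
  - apply in_flat_map; eauto.
  - apply IHdy, in_or_app; auto.
  - apply IHdy, in_or_app; auto.
  - apply in_app_or in Hx; intuition.
  - apply IHdy1, in_or_app; auto.
  - apply in_app_or in Hx; intuition.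
Qed.

Lemma dy_nil s : ~ dy [] s.
Proof. induction 1; auto. Qed.

Section Strengthening.
Variable T : list term.
Variable dom : list nat.
Hypothesis dom_fresh : forall y, In y dom -> ~ In y (flat_map vars T).

(* An analysis step can only produce an added variable of [dom] itself, since
   the keys it needs are subterms of [T] and hence [dom]-free. *)
Lemma dy_nf_strengthen t : dy_nf (T ++ map Var dom) t -> domfree dom t -> dy_nf T t.
Proof.
  revert t; refine (dy_nf_mut (T ++ map Var dom)
     (fun t _ => (exists x, In x dom /\ t = Var x) \/ dy_an T t)
     (fun t _ => domfree dom t -> dy_nf T t) _ _ _ _ _ _ _); intros.
  - apply in_app_or in i; destruct i as [H|H].
    + right; apply an_ax; auto.
    + left; apply in_map_iff in H; destruct H as [x [<- Hx]]; eauto.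
  - destruct H as [[x [_ Hx]]|Hx]; [discriminate|]; right; eapply an_fst; eauto.
  - destruct H as [[x [_ Hx]]|Hx]; [discriminate|]; right; eapply an_snd; eauto.
  - destruct H as [[x [_ Hx]]|Hx]; [discriminate|]; right; eapply an_dec; eauto.
    apply H0; intros y Hy Hyd; apply (dom_fresh y Hyd).
    apply dy_an_st, in_flat_map in Hx; destruct Hx as [s [Hs Hst]].
    apply in_flat_map; exists s; split; auto.
    eapply vars_st; [exact Hst|]; simpl; apply in_or_app; right.
    destruct k; simpl in e; try discriminate.
    + injection e; intros <-; exact Hy.
    + destruct (iskey n); try discriminate; injection e; intros <-; destruct Hy.
  - destruct H as [[x [Hx ->]]|Hx]; [exfalso; apply (H0 x); simpl; auto|].
    apply nf_an; auto.
  - apply nf_pair; [apply H|apply H0]; intros y Hy; apply H1; simpl; apply in_or_app; auto.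
  - apply nf_enc; auto; [apply H|apply H0]; intros y Hy; apply H1; simpl; apply in_or_app; auto.
Qed.

Lemma dy_strengthen t : dy (T ++ map Var dom) t -> domfree dom t -> dy T t.
Proof. intros H Hf; apply dy_nf_dy, dy_nf_strengthen, Hf; apply dy_dy_nf, H. Qed.

End Strengthening.

Lemma abstractable_child_dy Y big child i p :
  (forall q, subterm_at big (i :: q) = subterm_at child q) ->
  abstractable iskey kinv Y big p -> p <> [] -> dy Y child.
Proof.
  intros Hs [_ H] Hp; apply (H [i] child).
  - right; exists [], i, p; repeat split; auto.
    unfold in_Pos; rewrite Hs; destruct child; simpl; discriminate.
  - rewrite Hs; destruct child; reflexivity.
Qed.

Lemma abstractable_child Y big child i p :
  (forall q, subterm_at big (i :: q) = subterm_at child q) ->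
  abstractable iskey kinv Y big (i :: p) -> abstractable iskey kinv Y child p.
Proof.
  intros Hs [Hpos H]; split; [unfold in_Pos in *; rewrite <- Hs; auto|].
  intros q s Hq Hsq; apply (H (i :: q) s); [|rewrite Hs; auto].
  destruct Hq as [->|[q' [i' [r [-> [Hp [Hr ->]]]]]]].
  - right; exists [], i, (i :: p); repeat split; auto; try discriminate.
    unfold in_Pos; rewrite Hs; destruct child; simpl; discriminate.
  - right; exists (i :: q'), i', r; repeat split; auto.
    unfold in_Pos in *; rewrite Hs; auto.
Qed.

Section Admissible.
Variable T : list term.
Variable dom : list nat.
Hypothesis dom_fresh : forall y, In y dom -> ~ In y (flat_map vars T).
Local Notation DY := (dy T).

Definition vars_abstractable (r : term) : Prop :=
  forall x p, In x dom -> in_pos_var x r p -> abstractable iskey kinv (T ++ map Var dom) r p.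

Inductive admissible : term -> Prop :=
| adm_closed r : domfree dom r -> DY r -> admissible r
| adm_var x : In x dom -> admissible (Var x)
| adm_pair r0 r1 : admissible r0 -> admissible r1 -> admissible (Pair r0 r1)
| adm_enc r0 r1 : admissible r0 -> admissible r1 -> is_key r1 -> admissible (Enc r0 r1).

Lemma vars_abstractable_children big r0 r1 :
  big = Pair r0 r1 \/ big = Enc r0 r1 -> vars_abstractable big -> ~ domfree dom big ->
  dy (T ++ map Var dom) r0 /\ dy (T ++ map Var dom) r1 /\
  vars_abstractable r0 /\ vars_abstractable r1.
Proof.
  intros Hbig HP Hnd.
  assert (H0 : forall q, subterm_at big (0 :: q) = subterm_at r0 q)
    by (destruct Hbig; subst; reflexivity).
  assert (H1 : forall q, subterm_at big (1 :: q) = subterm_at r1 q)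
    by (destruct Hbig; subst; reflexivity).
  destruct (domfree_or_var dom big) as [|[y [Hy Hyd]]]; [contradiction|].
  destruct (var_position _ _ Hy) as [p Hp].
  assert (Hpn : p <> []) by (intros ->; destruct Hbig; subst; discriminate).
  pose proof (HP y p Hyd Hp) as Ha.
  split; [exact (abstractable_child_dy _ _ _ _ _ H0 Ha Hpn)|].
  split; [exact (abstractable_child_dy _ _ _ _ _ H1 Ha Hpn)|].
  split; intros x q Hx Hq.
  - apply (abstractable_child _ big r0 0 q H0), (HP x); auto; unfold in_pos_var; rewrite H0; auto.
  - apply (abstractable_child _ big r1 1 q H1), (HP x); auto; unfold in_pos_var; rewrite H1; auto.
Qed.

Lemma admissible_of_abstractable r :
  wf r -> vars_abstractable r -> (domfree dom r -> DY r) -> admissible r.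
Proof.
  induction r as [n|n|r0 IH0 r1 IH1|r0 IH0 r1 IH1]; intros Hw HP Hd.
  - destruct (in_dec Nat.eq_dec n dom) as [Hn|Hn]; [apply adm_var; auto|].
    assert (domfree dom (Var n)) by (intros y [<-|[]]; auto); apply adm_closed; auto.
  - assert (domfree dom (Nm n)) by (intros y []); apply adm_closed; auto.
  - destruct (classic (domfree dom (Pair r0 r1))) as [Hf|Hnf]; [apply adm_closed; auto|].
    destruct (vars_abstractable_children (Pair r0 r1) r0 r1) as [D0 [D1 [P0 P1]]]; auto.
    destruct Hw; apply adm_pair; [apply IH0|apply IH1]; auto;
      intros Hf; eapply dy_strengthen; eauto.
  - destruct (classic (domfree dom (Enc r0 r1))) as [Hf|Hnf]; [apply adm_closed; auto|].
    destruct (vars_abstractable_children (Enc r0 r1) r0 r1) as [D0 [D1 [P0 P1]]]; auto.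
    destruct Hw as [Hw Hk]; apply adm_enc; auto; [apply IH0|apply IH1]; auto using key_wf;
      intros Hf; eapply dy_strengthen; eauto.
Qed.

Lemma admissible_st r r' :
  admissible r -> In r' (st r) -> ~ domfree dom r' -> admissible r'.
Proof.
  induction 1; simpl; intros Hr' Hd.
  - exfalso; apply Hd; eapply domfree_st; eauto.
  - destruct Hr' as [<-|[]]; apply adm_var; auto.
  - destruct Hr' as [<-|Hr']; [apply adm_pair; auto|apply in_app_or in Hr'; intuition].
  - destruct Hr' as [<-|Hr']; [apply adm_enc; auto|apply in_app_or in Hr'; intuition].
Qed.

Lemma admissible_enc_inv r0 r1 :
  admissible (Enc r0 r1) -> ~ domfree dom (Enc r0 r1) ->
  admissible r0 /\ admissible r1 /\ is_key r1.
Proof. inversion 1; subst; auto; contradiction. Qed.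

Lemma admissible_subst_dy s r :
  (forall x, In x dom -> DY (s x)) -> admissible r ->
  wf (subst_on dom s r) -> DY (subst_on dom s r).
Proof.
  intros Hs; induction 1; intros Hw.
  - rewrite subst_on_domfree; auto.
  - rewrite subst_on_var; auto.
  - destruct Hw; apply dy_pair; auto.
  - destruct Hw; apply dy_enc; auto using key_wf.
Qed.

Lemma wf_subst_keys s s' r :
  wf (subst_on dom s r) -> (forall x, In x dom -> wf (s' x)) ->
  (forall x, In x dom -> In (Var x) (st r) -> is_key (s x) -> is_key (s' x)) ->
  wf (subst_on dom s' r).
Proof.
  induction r as [n|n|r0 IH0 r1 IH1|r0 IH0 r1 IH1]; intros Hw Hs' Hk.
  - destruct (in_dec Nat.eq_dec n dom) as [Hn|Hn].
    + rewrite subst_on_var; auto.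
    + rewrite subst_on_domfree; [exact I|intros y [<-|[]]; auto].
  - exact I.
  - destruct Hw; split; [apply IH0|apply IH1]; auto;
      intros x Hx Hst; apply Hk; auto; eapply st_trans; eauto using st_pair_l, st_pair_r.
  - destruct Hw as [Hw Hkey]; split; [apply IH0; auto|].
    + intros x Hx Hst; apply Hk; auto; eapply st_trans; eauto using st_enc_l.
    + change (is_key (subst_on dom s r1)) in Hkey; change (is_key (subst_on dom s' r1)).
      destruct r1 as [m|m|a b|a b]; try contradiction.
      * destruct (in_dec Nat.eq_dec m dom) as [Hm|Hm].
        -- rewrite subst_on_var in *; auto; apply Hk; auto using st_enc_r.
        -- rewrite subst_on_domfree; [exact I|intros y [<-|[]]; auto].
      * exact Hkey.
Qed.

End Admissible.

(* [vleaf t] is the value of an atom [t] outside [base]; [vatom b] that of an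
   |-_eq class without composite members in [base], named by its member [b]. *)
Inductive val : Type :=
| vleaf : term -> val
| vatom : term -> val
| vpair : val -> val -> val
| venc : val -> val -> val.

Fixpoint tsize (t : term) : nat :=
  match t with Pair a b | Enc a b => S (tsize a + tsize b) | _ => 1 end.

Lemma tsize_pos t : 1 <= tsize t.
Proof. destruct t; simpl; lia. Qed.

Section TermModel.
Variable T : list term.
Variable E : list (term * term).
Variable U : list term.
Variable lam : nat -> term.
Hypothesis U_st_closed : forall s s', In s U -> In s' (st s) -> In s' U.
Hypothesis U_wf : forall s, In s U -> wf s.
Hypothesis E_in_U : forall a b, In (a, b) E -> In a U /\ In b U /\ dy T a /\ dy T b.
Hypothesis lam_unifies : forall a b, In (a, b) E -> Defs.app lam a = Defs.app lam b.
Hypothesis T_in_U : forall s, In s T -> In s U \/ is_atom s = true.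
Local Notation DY := (dy T).
Local Notation EQ := (eqd iskey kinv T E).

Lemma eqd_unified a b : EQ a b -> Defs.app lam a = Defs.app lam b.
Proof. induction 1; simpl in *; auto; congruence. Qed.

Fixpoint constructible (s : term) : Prop :=
  DY s \/ match s with Pair a b | Enc a b => constructible a /\ constructible b | _ => False end.

Lemma eqd_constructible a b : EQ a b -> constructible a /\ constructible b.
Proof.
  induction 1; simpl in *; try tauto.
  1: destruct (E_in_U _ _ H) as [_ [_ [? ?]]]; destruct t, u; simpl; auto.
  1: destruct t; simpl; auto.
  all: match goal with |- constructible ?a /\ constructible ?b =>
         destruct a, b; simpl; auto end.
Qed.

Lemma constructible_dy s : wf s -> constructible s -> DY s.
Proof.
  induction s; simpl; intros Hw Hc; try (destruct Hc as [Hc|[]]; exact Hc).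
  - destruct Hc as [Hc|[H1 H2]]; auto; destruct Hw; apply dy_pair; auto.
  - destruct Hc as [Hc|[H1 H2]]; auto; destruct Hw as [Hw Hk]; apply dy_enc; auto using key_wf.
Qed.

Definition base : list term := filter (fun s => dec (DY s)) U.

Lemma in_base s : In s base <-> In s U /\ DY s.
Proof. unfold base; rewrite filter_In, dec_spec; tauto. Qed.

(* [Nm 0] is never returned on the arguments that matter (members of [base]). *)
Definition class_rep (s : term) : term :=
  match find (fun b => dec (EQ s b)) base with Some b => b | None => Nm 0 end.
Definition is_pair (b : term) : bool := match b with Pair _ _ => true | _ => false end.
Definition is_dy_enc (b : term) : bool :=
  match b with Enc c0 c1 => dec (DY c0) && dec (DY c1) | _ => false end.
Definition pair_rep (s : term) : option term := find (fun b => dec (EQ s b) && is_pair b) base.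
Definition enc_rep (s : term) : option term := find (fun b => dec (EQ s b) && is_dy_enc b) base.

Definition size (s : term) : nat := tsize (Defs.app lam s).

(* The fuel [size s] suffices: it is constant on |-_eq classes and decreases
   from a pair or ciphertext to its components. *)
Fixpoint interp_fuel (n : nat) (s : term) : val :=
  match n with
  | 0 => vatom (class_rep s)
  | S n' =>
    match pair_rep s with
    | Some (Pair c0 c1) => vpair (interp_fuel n' c0) (interp_fuel n' c1)
    | _ => match enc_rep s with
           | Some (Enc c0 c1) => venc (interp_fuel n' c0) (interp_fuel n' c1)
           | _ => vatom (class_rep s)
           end
    end
  end.

Definition interp_base (s : term) : val := interp_fuel (size s) s.

Fixpoint interp (s : term) : val :=
  if in_dec term_eq_dec s base then interp_base s else
  match s with
  | Pair a b => vpair (interp a) (interp b)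
  | Enc a b => venc (interp a) (interp b)
  | _ => vleaf s
  end.

Lemma interp_in_base s : In s base -> interp s = interp_base s.
Proof. intros H; destruct s; simpl; destruct (in_dec term_eq_dec _ base); tauto. Qed.

Lemma interp_not_base s : ~ In s base ->
  interp s = match s with
             | Pair a b => vpair (interp a) (interp b)
             | Enc a b => venc (interp a) (interp b)
             | _ => vleaf s
             end.
Proof. intros H; destruct s; simpl; destruct (in_dec term_eq_dec _ base); tauto. Qed.

Lemma size_eqd a b : EQ a b -> size a = size b.
Proof. intros H; unfold size; rewrite (eqd_unified _ _ H); auto. Qed.

Lemma reps_eqd s s' : EQ s s' ->
  class_rep s = class_rep s' /\ pair_rep s = pair_rep s' /\ enc_rep s = enc_rep s'.
Proof.
  intros H; unfold class_rep, pair_rep, enc_rep.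
  assert (Hc : forall b, dec (EQ s b) = dec (EQ s' b)).
  { intros b; apply dec_iff; split; intros; eapply eqd_trans; eauto using eqd_sym. }
  repeat split; (erewrite find_ext; [reflexivity|]); intros b; rewrite Hc; reflexivity.
Qed.

Lemma interp_base_eqd s s' : EQ s s' -> interp_base s = interp_base s'.
Proof.
  intros H; unfold interp_base; rewrite (size_eqd _ _ H).
  destruct (reps_eqd _ _ H) as [H1 [H2 H3]].
  destruct (size s'); simpl; rewrite ?H1, ?H2, ?H3; reflexivity.
Qed.

Lemma pair_rep_spec s b : pair_rep s = Some b -> In b base /\ EQ s b /\ is_pair b = true.
Proof. intros H; apply find_some in H; rewrite andb_true_iff, dec_spec in H; tauto. Qed.

Lemma enc_rep_spec s b : enc_rep s = Some b -> In b base /\ EQ s b /\ is_dy_enc b = true.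
Proof. intros H; apply find_some in H; rewrite andb_true_iff, dec_spec in H; tauto. Qed.

Lemma interp_fuel_enough n m s : size s <= n -> size s <= m -> interp_fuel n s = interp_fuel m s.
Proof.
  revert m s; induction n; intros m s Hn Hm; pose proof (tsize_pos (Defs.app lam s));
    unfold size in *; [lia|].
  destruct m; [lia|]; simpl.
  destruct (pair_rep s) as [[| |c0 c1|]|] eqn:HP.
  3: { destruct (pair_rep_spec _ _ HP) as [_ [Hq _]]; apply size_eqd in Hq.
       unfold size in Hq; simpl in Hq; f_equal; apply IHn; unfold size; lia. }
  all: destruct (enc_rep s) as [[| | |c0 c1]|] eqn:HE; auto.
  all: destruct (enc_rep_spec _ _ HE) as [_ [Hq _]]; apply size_eqd in Hq.
  all: unfold size in Hq; simpl in Hq; f_equal; apply IHn; unfold size; lia.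
Qed.

Lemma interp_base_unfold s : interp_base s =
  match pair_rep s with
  | Some (Pair c0 c1) => vpair (interp_base c0) (interp_base c1)
  | _ => match enc_rep s with
         | Some (Enc c0 c1) => venc (interp_base c0) (interp_base c1)
         | _ => vatom (class_rep s)
         end
  end.
Proof.
  unfold interp_base at 1; pose proof (tsize_pos (Defs.app lam s)).
  destruct (size s) as [|n] eqn:Hs; [unfold size in Hs; lia|]; simpl.
  destruct (pair_rep s) as [[| |c0 c1|]|] eqn:HP.
  3: { destruct (pair_rep_spec _ _ HP) as [_ [Hq _]]; apply size_eqd in Hq.
       unfold size in Hq, Hs; simpl in Hq.
       unfold interp_base; f_equal; apply interp_fuel_enough; unfold size; lia. }
  all: destruct (enc_rep s) as [[| | |c0 c1]|] eqn:HE; auto.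
  all: destruct (enc_rep_spec _ _ HE) as [_ [Hq _]]; apply size_eqd in Hq.
  all: unfold size in Hq, Hs; simpl in Hq.
  all: unfold interp_base; f_equal; apply interp_fuel_enough; unfold size; lia.
Qed.

Lemma class_rep_spec s : In s base -> In (class_rep s) base /\ EQ s (class_rep s).
Proof.
  intros Hs; unfold class_rep.
  destruct (find_exists (fun b => dec (EQ s b)) base s Hs) as [y Hy].
  { apply dec_spec, eqd_eq, in_base, Hs. }
  rewrite Hy; apply find_some in Hy; rewrite dec_spec in Hy; exact Hy.
Qed.

Lemma base_children s c0 c1 :
  In s base -> s = Pair c0 c1 \/ (s = Enc c0 c1 /\ DY c0 /\ DY c1) -> In c0 base /\ In c1 base.
Proof.
  rewrite !in_base; intros [HU Hd] [->|[-> [H0 H1]]]; repeat split.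
  all: eauto using st_pair_l, st_pair_r, st_enc_l, st_enc_r, dy_fst, dy_snd.
Qed.

Lemma interp_base_cases s :
  (exists c0 c1, interp_base s = vpair (interp_base c0) (interp_base c1) /\
                 In c0 base /\ In c1 base /\ EQ s (Pair c0 c1)) \/
  (exists c0 c1, interp_base s = venc (interp_base c0) (interp_base c1) /\
                 In c0 base /\ In c1 base /\ EQ s (Enc c0 c1)) \/
  (interp_base s = vatom (class_rep s) /\
   (forall c0 c1, In (Pair c0 c1) base -> ~ EQ s (Pair c0 c1)) /\
   (forall c0 c1, In (Enc c0 c1) base -> DY c0 -> DY c1 -> ~ EQ s (Enc c0 c1))).
Proof.
  rewrite interp_base_unfold.
  destruct (pair_rep s) as [b|] eqn:HP.
  { destruct (pair_rep_spec _ _ HP) as [Hb [Hq Hpr]].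
    destruct b as [| |c0 c1|]; try discriminate; left; exists c0, c1.
    destruct (base_children _ c0 c1 Hb) as [H0 H1]; auto. }
  destruct (enc_rep s) as [b|] eqn:HE.
  { destruct (enc_rep_spec _ _ HE) as [Hb [Hq Hk]].
    destruct b as [| | |c0 c1]; try discriminate; right; left; exists c0, c1.
    simpl in Hk; rewrite andb_true_iff, !dec_spec in Hk.
    destruct (base_children _ c0 c1 Hb) as [H0 H1]; auto. }
  right; right; repeat split; intros c0 c1 Hb.
  - intros Hq; eapply find_none in HP; [|exact Hb]; simpl in HP.
    rewrite (proj2 (dec_spec _) Hq) in HP; discriminate.
  - intros H0 H1 Hq; eapply find_none in HE; [|exact Hb]; simpl in HE.
    rewrite (proj2 (dec_spec _) Hq), (proj2 (dec_spec _) H0), (proj2 (dec_spec _) H1) in HE.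
    discriminate.
Qed.

Lemma interp_pair a b : interp (Pair a b) = vpair (interp a) (interp b).
Proof.
  destruct (in_dec term_eq_dec (Pair a b) base) as [Hin|Hn]; [|apply interp_not_base, Hn].
  destruct (base_children _ a b Hin) as [Ha Hb]; auto.
  assert (Hd : DY (Pair a b)) by (apply in_base, Hin).
  rewrite !interp_in_base by auto.
  destruct (interp_base_cases (Pair a b))
    as [[c0 [c1 [-> [H0 [H1 Hq]]]]]|[[c0 [c1 [_ [_ [_ Hq]]]]]|[_ [Hno _]]]].
  - assert (D0 : DY c0) by (apply in_base, H0); assert (D1 : DY c1) by (apply in_base, H1).
    f_equal; apply interp_base_eqd, eqd_sym.
    + apply (eqd_proj0_pair _ _ _ _ _ _ _ _ Hq); eauto using dy_fst, dy_snd.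
    + apply (eqd_proj1_pair _ _ _ _ _ _ _ _ Hq); eauto using dy_fst, dy_snd.
  - apply eqd_unified in Hq; discriminate.
  - exfalso; apply (Hno a b Hin), eqd_eq, Hd.
Qed.

Lemma interp_enc a k : (In (Enc a k) base -> DY a /\ DY k) ->
  interp (Enc a k) = venc (interp a) (interp k).
Proof.
  intros Hdy; destruct (in_dec term_eq_dec (Enc a k) base) as [Hin|Hn];
    [|apply interp_not_base, Hn].
  destruct (Hdy Hin) as [Da Dk].
  destruct (base_children _ a k Hin) as [Ha Hk]; auto.
  rewrite !interp_in_base by auto.
  destruct (interp_base_cases (Enc a k))
    as [[c0 [c1 [_ [_ [_ Hq]]]]]|[[c0 [c1 [-> [H0 [H1 Hq]]]]]|[_ [_ Hno]]]].
  - apply eqd_unified in Hq; discriminate.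
  - assert (D0 : DY c0) by (apply in_base, H0); assert (D1 : DY c1) by (apply in_base, H1).
    f_equal; apply interp_base_eqd, eqd_sym.
    + apply (eqd_proj0_enc _ _ _ _ _ _ _ _ Hq); auto.
    + apply (eqd_proj1_enc _ _ _ _ _ _ _ _ Hq); auto.
  - exfalso; apply (Hno a k Hin Da Dk), eqd_eq, in_base, Hin.
Qed.

Lemma interp_sound a b : EQ a b -> interp a = interp b.
Proof.
  induction 1; auto; try congruence.
  - destruct (E_in_U _ _ H) as [Ht [Hu [Hdt Hdu]]].
    rewrite !interp_in_base by (apply in_base; auto); apply interp_base_eqd, eqd_ax, H.
  - rewrite !interp_pair; congruence.
  - destruct (eqd_constructible _ _ H) as [C0 C1], (eqd_constructible _ _ H0) as [C2 C3].
    assert (Hdy : forall a k, constructible a -> constructible k ->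
                  In (Enc a k) base -> DY a /\ DY k).
    { intros a k Ca Ck Hin; apply in_base in Hin; destruct Hin as [HU _].
      destruct (U_wf _ HU) as [Wa Kk]; split; apply constructible_dy; auto using key_wf. }
    rewrite !interp_enc by auto; congruence.
  - rewrite !interp_pair in IHeqd; congruence.
  - rewrite !interp_pair in IHeqd; congruence.
  - rewrite !interp_enc in IHeqd by auto; congruence.
  - rewrite !interp_enc in IHeqd by auto; congruence.
Qed.

Lemma dy_not_base a : DY a -> ~ In a base ->
  (exists a0 a1, a = Pair a0 a1 /\ DY a0 /\ DY a1) \/
  (exists a0 a1, a = Enc a0 a1 /\ DY a0 /\ DY a1) \/ is_atom a = true.
Proof.
  intros Hd Hn; destruct (dy_locality _ _ Hd) as [Hl|[Hl|Hl]]; auto.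
  apply in_flat_map in Hl; destruct Hl as [s [Hs Hst]].
  destruct (T_in_U _ Hs) as [HU|Ha].
  - exfalso; apply Hn, in_base; eauto.
  - rewrite st_atom in Hst by auto; destruct Hst as [<-|[]]; auto.
Qed.

Lemma interp_vleaf_inv c t : interp c = vleaf t -> c = t.
Proof.
  destruct (in_dec term_eq_dec c base) as [Hin|Hn].
  - rewrite interp_in_base by auto.
    destruct (interp_base_cases c) as [[? [? [-> _]]]|[[? [? [-> _]]]|[-> _]]]; discriminate.
  - rewrite interp_not_base by auto; destruct c; congruence.
Qed.

Lemma interp_vatom_inv c t : interp c = vatom t -> EQ c t.
Proof.
  destruct (in_dec term_eq_dec c base) as [Hin|Hn].
  - rewrite interp_in_base by auto.
    destruct (interp_base_cases c) as [[? [? [-> _]]]|[[? [? [-> _]]]|[-> _]]]; try discriminate.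
    injection 1; intros <-; apply class_rep_spec, Hin.
  - rewrite interp_not_base by auto; destruct c; discriminate.
Qed.

Lemma interp_vpair_inv a v0 v1 : DY a -> interp a = vpair v0 v1 ->
  exists a0 a1, DY a0 /\ DY a1 /\ EQ a (Pair a0 a1) /\ interp a0 = v0 /\ interp a1 = v1.
Proof.
  intros Hd Hv; destruct (in_dec term_eq_dec a base) as [Hin|Hn].
  - rewrite interp_in_base in Hv by auto.
    destruct (interp_base_cases a) as [[c0 [c1 [He [H0 [H1 Hq]]]]]|[[? [? [He _]]]|[He _]]];
      rewrite He in Hv; try discriminate.
    injection Hv; intros <- <-; exists c0, c1; rewrite !interp_in_base by auto.
    repeat split; auto; apply in_base; auto.
  - destruct (dy_not_base _ Hd Hn) as [[a0 [a1 [-> [H0 H1]]]]|[[a0 [a1 [-> [H0 H1]]]]|Ha]].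
    + rewrite interp_pair in Hv; injection Hv; intros <- <-.
      exists a0, a1; repeat split; auto; apply eqd_eq, Hd.
    + rewrite interp_enc in Hv by auto; discriminate.
    + rewrite interp_not_base in Hv by auto; destruct a; discriminate.
Qed.

Lemma interp_venc_inv a v0 v1 : DY a -> interp a = venc v0 v1 ->
  exists a0 a1, DY a0 /\ DY a1 /\ EQ a (Enc a0 a1) /\ interp a0 = v0 /\ interp a1 = v1.
Proof.
  intros Hd Hv; destruct (in_dec term_eq_dec a base) as [Hin|Hn].
  - rewrite interp_in_base in Hv by auto.
    destruct (interp_base_cases a) as [[? [? [He _]]]|[[c0 [c1 [He [H0 [H1 Hq]]]]]|[He _]]];
      rewrite He in Hv; try discriminate.
    injection Hv; intros <- <-; exists c0, c1; rewrite !interp_in_base by auto.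
    repeat split; auto; apply in_base; auto.
  - destruct (dy_not_base _ Hd Hn) as [[a0 [a1 [-> [H0 H1]]]]|[[a0 [a1 [-> [H0 H1]]]]|Ha]].
    + rewrite interp_pair in Hv; discriminate.
    + rewrite interp_enc in Hv by auto; injection Hv; intros <- <-.
      exists a0, a1; repeat split; auto; apply eqd_eq, Hd.
    + rewrite interp_not_base in Hv by auto; destruct a; discriminate.
Qed.

Lemma interp_faithful a b : DY a -> DY b -> interp a = interp b -> EQ a b.
Proof.
  remember (interp a) as v eqn:Hva; symmetry in Hva; intros Ha Hb Hvb; symmetry in Hvb.
  revert a b Ha Hb Hva Hvb.
  induction v as [t|t|v0 IH0 v1 IH1|v0 IH0 v1 IH1]; intros a b Ha Hb Hva Hvb.
  - apply interp_vleaf_inv in Hva, Hvb; subst; apply eqd_eq, Hb.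
  - apply interp_vatom_inv in Hva, Hvb; eapply eqd_trans; eauto using eqd_sym.
  - destruct (interp_vpair_inv _ _ _ Ha Hva) as [a0 [a1 [Ha0 [Ha1 [Hqa [E0 E1]]]]]].
    destruct (interp_vpair_inv _ _ _ Hb Hvb) as [b0 [b1 [Hb0 [Hb1 [Hqb [F0 F1]]]]]].
    eapply eqd_trans; [exact Hqa|]; eapply eqd_trans; [|apply eqd_sym; exact Hqb].
    apply eqd_cons_pair; [apply IH0|apply IH1]; congruence.
  - destruct (interp_venc_inv _ _ _ Ha Hva) as [a0 [a1 [Ha0 [Ha1 [Hqa [E0 E1]]]]]].
    destruct (interp_venc_inv _ _ _ Hb Hvb) as [b0 [b1 [Hb0 [Hb1 [Hqb [F0 F1]]]]]].
    eapply eqd_trans; [exact Hqa|]; eapply eqd_trans; [|apply eqd_sym; exact Hqb].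
    apply eqd_cons_enc; [apply IH0|apply IH1]; congruence.
Qed.

Section SmallWitness.
Variable dom : list nat.
Variable mu : nat -> term.
Variables tl tr : term.
Hypothesis dom_fresh : forall y, In y dom -> ~ In y (flat_map vars T).
Hypothesis mu_dy : forall x, In x dom -> DY (mu x).
Definition sides : list term := st tl ++ st tr.
Hypothesis sides_in_U : forall s, In s sides -> In s U.
Hypothesis tl_adm : admissible T dom tl.
Hypothesis tr_adm : admissible T dom tr.
Local Notation msub := (subst_on dom mu).
Hypothesis tl_wf : wf (msub tl).
Hypothesis tr_wf : wf (msub tr).
Variable c0 : term.
Hypothesis c0_base : In c0 base.

Definition mval (r : term) : val := interp (msub r).

(* Variables whose [mu]-value is an atom occurring in [alpha] keep it: such an
   atom may be needed as a key. *)
Definition kept (x : nat) : Prop := is_atom (mu x) = true /\ In (Var x) sides.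

Definition anchors : list term := base ++ map mu (filter (fun x => dec (kept x)) dom).

Definition represented (v : val) : Prop := exists b, In b anchors /\ interp b = v.

Definition representative (v : val) : term :=
  match find (fun b => dec (interp b = v)) anchors with Some b => b | None => c0 end.

Definition skeleton : list term :=
  filter (fun r => dec (is_atom r = false /\ ~ domfree dom r)) sides.

(* Pairs and ciphertexts are rebuilt only for values of subterms of [alpha]
   containing bound variables; a rebuilt ciphertext reuses the [mu]-instance of
   the key of that subterm, so that it remains a key. *)
Fixpoint reify (v : val) : term :=
  if dec (represented v) then representative v else
  match v, find (fun r => dec (mval r = v)) skeleton with
  | vpair v0 v1, Some _ => Pair (reify v0) (reify v1)
  | venc v0 _, Some (Enc _ k) => Enc (reify v0) (msub k)
  | _, _ => c0
  end.

Definition nu (x : nat) : term := if dec (kept x) then mu x else reify (interp (mu x)).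
Local Notation nsub := (subst_on dom nu).

Lemma reify_unfold v : reify v =
  if dec (represented v) then representative v else
  match v, find (fun r => dec (mval r = v)) skeleton with
  | vpair v0 v1, Some _ => Pair (reify v0) (reify v1)
  | venc v0 _, Some (Enc _ k) => Enc (reify v0) (msub k)
  | _, _ => c0
  end.
Proof. destruct v; reflexivity. Qed.

Lemma sides_st r r' : In r sides -> In r' (st r) -> In r' sides.
Proof.
  unfold sides; rewrite !in_app_iff; intros [H|H] Hr'; [left|right]; eapply st_trans; eauto.
Qed.

Lemma msub_wf r : In r sides -> wf (msub r).
Proof.
  unfold sides; rewrite in_app_iff; intros [H|H]; eapply wf_st;
    [exact tl_wf| |exact tr_wf|]; apply st_app, H.
Qed.

Lemma anchors_cases b : In b anchors -> In b base \/ exists y, In y dom /\ kept y /\ mu y = b.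
Proof.
  unfold anchors; rewrite in_app_iff, in_map_iff; intros [H|[y [<- Hy]]]; auto.
  apply filter_In in Hy; rewrite dec_spec in Hy; right; exists y; tauto.
Qed.

Lemma anchors_dy_wf b : In b anchors -> DY b /\ wf b.
Proof.
  intros Hb; destruct (anchors_cases b Hb) as [H|[y [Hy [[Ha _] <-]]]].
  - apply in_base in H; destruct H; auto.
  - split; auto; destruct (mu y); simpl in *; auto; discriminate.
Qed.

Lemma representative_spec v :
  represented v -> In (representative v) anchors /\ interp (representative v) = v.
Proof.
  intros [b [Hb Hv]]; unfold representative.
  destruct (find_exists (fun b => dec (interp b = v)) anchors b Hb) as [y Hy];
    [apply dec_spec, Hv|].
  rewrite Hy; apply find_some in Hy; rewrite dec_spec in Hy; exact Hy.
Qed.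

Lemma representative_in v : In (representative v) anchors.
Proof.
  unfold representative; destruct (find _ anchors) eqn:Hf.
  - apply find_some in Hf; tauto.
  - apply in_or_app; left; exact c0_base.
Qed.

Lemma reify_represented v : represented v -> interp (reify v) = v.
Proof.
  intros H; rewrite reify_unfold, (proj2 (dec_spec _) H); apply representative_spec, H.
Qed.

Lemma represented_anchor b : In b anchors -> represented (interp b).
Proof. exists b; auto. Qed.

Lemma represented_children v v0 v1 : represented v -> v = vpair v0 v1 \/ v = venc v0 v1 ->
  represented v0 /\ represented v1.
Proof.
  intros [b [Hb Hv]] Hv'; destruct (in_dec term_eq_dec b base) as [Hin|Hn].
  - rewrite interp_in_base in Hv by auto.
    destruct (interp_base_cases b)
      as [[a0 [a1 [He [H0 [H1 _]]]]]|[[a0 [a1 [He [H0 [H1 _]]]]]|[He _]]];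
      rewrite He in Hv; subst v; destruct Hv' as [Hv'|Hv']; try discriminate;
      injection Hv'; intros <- <-; rewrite <- !interp_in_base by auto;
      split; apply represented_anchor, in_or_app; auto.
  - destruct (anchors_cases b Hb) as [|[y [_ [[Ha _] Hy]]]]; [contradiction|].
    rewrite interp_not_base in Hv by auto; subst b v.
    destruct (mu y); try discriminate; destruct Hv'; discriminate.
Qed.

Lemma skeleton_spec r : In r skeleton ->
  In r sides /\ is_atom r = false /\ ~ domfree dom r /\ admissible T dom r.
Proof.
  unfold skeleton; rewrite filter_In, dec_spec; intros [Hs [Ha Hd]]; repeat split; auto.
  unfold sides in Hs; apply in_app_iff in Hs.
  destruct Hs; eapply admissible_st; [exact tl_adm| | |exact tr_adm| |]; eauto.
Qed.

Lemma msub_dy r : admissible T dom r -> In r sides -> DY (msub r).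
Proof. intros Ha Hs; apply admissible_subst_dy; auto using msub_wf. Qed.

Lemma mval_pair r0 r1 : mval (Pair r0 r1) = vpair (mval r0) (mval r1).
Proof. apply interp_pair. Qed.

Lemma mval_enc r0 r1 : DY (msub r0) -> DY (msub r1) -> mval (Enc r0 r1) = venc (mval r0) (mval r1).
Proof. intros; apply interp_enc; auto. Qed.

Lemma skeleton_enc a k : In (Enc a k) skeleton ->
  In k sides /\ admissible T dom k /\ is_key (msub k) /\ DY (msub a) /\ DY (msub k).
Proof.
  intros H; destruct (skeleton_spec _ H) as [Hs [_ [Hd Hadm]]].
  destruct (admissible_enc_inv _ _ _ _ Hadm Hd) as [Ha [Hk _]].
  assert (Has : In a sides) by (apply (sides_st (Enc a k)); auto using st_enc_l).
  assert (Hks : In k sides) by (apply (sides_st (Enc a k)); auto using st_enc_r).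
  destruct (msub_wf _ Hs) as [_ Hkey]; repeat split; auto using msub_dy.
Qed.

Lemma reify_dy_wf v : DY (reify v) /\ wf (reify v).
Proof.
  assert (Hc0 : DY c0 /\ wf c0).
  { apply in_base in c0_base; destruct c0_base; auto. }
  induction v as [t|t|v0 IH0 v1 IH1|v0 IH0 v1 IH1]; rewrite reify_unfold;
    destruct (dec (represented _)); auto using anchors_dy_wf, representative_in.
  - destruct (find _ skeleton); auto.
    destruct IH0, IH1; split; [apply dy_pair|split]; auto.
  - destruct (find _ skeleton) as [[| | |a k]|] eqn:Hf; auto.
    apply find_some in Hf; destruct Hf as [Hf _].
    destruct (skeleton_enc _ _ Hf) as [_ [_ [Hkey [_ Dk]]]].
    destruct IH0; split; [apply dy_enc|split]; auto.
Qed.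

Lemma nu_dy_wf x : In x dom -> DY (nu x) /\ wf (nu x).
Proof.
  intros Hx; unfold nu; destruct (dec (kept x)) eqn:Hk; [|apply reify_dy_wf].
  rewrite dec_spec in Hk; destruct Hk as [Ha _]; split; auto.
  destruct (mu x); simpl in *; auto; discriminate.
Qed.

Lemma nu_kept x : kept x -> nu x = mu x.
Proof. intros Hk; unfold nu; rewrite (proj2 (dec_spec _) Hk); reflexivity. Qed.

Lemma nsub_wf r : In r sides -> wf (nsub r).
Proof.
  intros Hs; apply (wf_subst_keys dom mu); auto using msub_wf.
  - intros x Hx; apply nu_dy_wf, Hx.
  - intros x Hx Hst Hk; rewrite nu_kept; auto.
    split; [apply key_atom, Hk|eapply sides_st; eauto].
Qed.

Lemma nsub_dy r : admissible T dom r -> In r sides -> DY (nsub r).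
Proof. intros Ha Hs; apply admissible_subst_dy; auto using nsub_wf; apply nu_dy_wf. Qed.

Lemma closed_represented r :
  domfree dom r -> admissible T dom r -> In r sides -> represented (mval r).
Proof.
  intros Hf Ha Hs; apply represented_anchor, in_or_app; left; apply in_base.
  pose proof (msub_dy r Ha Hs) as Hd; rewrite subst_on_domfree in * by auto; auto.
Qed.

Lemma key_represented r : admissible T dom r -> is_key r -> is_key (msub r) -> In r sides ->
  represented (mval r).
Proof.
  intros Ha Hk Hk' Hs; destruct (domfree_or_var dom r) as [Hf|[y [Hy Hyd]]].
  - apply closed_represented; auto.
  - destruct r as [n| | |]; try contradiction; destruct Hy as [<-|[]].
    unfold mval; rewrite subst_on_var in * by auto.
    apply represented_anchor, in_or_app; right; apply in_map, filter_In.
    rewrite dec_spec; repeat split; auto using key_atom.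
Qed.

Lemma reify_vpair w0 w1 : (exists r, In r skeleton /\ mval r = vpair w0 w1) ->
  interp (reify (vpair w0 w1)) = vpair (interp (reify w0)) (interp (reify w1)).
Proof.
  intros [r [Hr Hv]]; rewrite reify_unfold; destruct (dec (represented _)) eqn:Hrep.
  - rewrite dec_spec in Hrep.
    destruct (represented_children _ w0 w1 Hrep) as [R0 R1]; auto.
    rewrite !reify_represented; auto; apply representative_spec, Hrep.
  - destruct (find_exists (fun r => dec (mval r = vpair w0 w1)) skeleton r Hr) as [r' ->];
      [apply dec_spec, Hv|apply interp_pair].
Qed.

Lemma reify_venc w0 w1 : (exists r, In r skeleton /\ mval r = venc w0 w1) -> represented w1 ->
  interp (reify (venc w0 w1)) = venc (interp (reify w0)) w1.
Proof.
  intros [r [Hr Hv]] R1; rewrite reify_unfold; destruct (dec (represented _)) eqn:Hrep.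
  - rewrite dec_spec in Hrep.
    destruct (represented_children _ w0 w1 Hrep) as [R0 _]; auto.
    rewrite reify_represented; auto; apply representative_spec, Hrep.
  - destruct (find_exists (fun r => dec (mval r = venc w0 w1)) skeleton r Hr) as [r' Hf];
      [apply dec_spec, Hv|].
    rewrite Hf; apply find_some in Hf; rewrite dec_spec in Hf; destruct Hf as [Hr' Hv'].
    destruct (skeleton_spec _ Hr') as [_ [Hat _]].
    destruct r' as [| |a k|a k]; try discriminate; [rewrite mval_pair in Hv'; discriminate|].
    destruct (skeleton_enc _ _ Hr') as [_ [_ [_ [Da Dk]]]].
    rewrite mval_enc in Hv' by auto; injection Hv'; intros <- _.
    apply interp_enc; split; auto; apply reify_dy_wf.
Qed.

Lemma skeleton_intro r : In r sides -> is_atom r = false -> ~ domfree dom r -> In r skeleton.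
Proof. intros; unfold skeleton; rewrite filter_In, dec_spec; auto. Qed.

Lemma sides_l : In tl sides.
Proof. apply in_or_app; left; apply st_refl. Qed.
Lemma sides_r : In tr sides.
Proof. apply in_or_app; right; apply st_refl. Qed.

Lemma nsub_closed r : domfree dom r -> admissible T dom r -> In r sides ->
  interp (nsub r) = interp (reify (mval r)).
Proof.
  intros Hf Ha Hs; rewrite reify_represented by (apply closed_represented; auto).
  unfold mval; rewrite !subst_on_domfree; auto.
Qed.

Lemma nsub_interp r : admissible T dom r -> In r sides -> interp (nsub r) = interp (reify (mval r)).
Proof.
  intros Ha; induction Ha as [r Hf Hd|x Hx|r0 r1 H0 IH0 H1 IH1|r0 r1 H0 IH0 H1 IH1 Hk]; intros Hs.
  - apply nsub_closed; auto; apply adm_closed; auto.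
  - unfold mval; rewrite !subst_on_var by auto; unfold nu.
    destruct (dec (kept x)) eqn:Hkept; auto; rewrite dec_spec in Hkept.
    rewrite reify_represented; auto; apply represented_anchor, in_or_app; right.
    apply in_map, filter_In; rewrite dec_spec; auto.
  - assert (S0 : In r0 sides) by (apply (sides_st (Pair r0 r1)); auto using st_pair_l).
    assert (S1 : In r1 sides) by (apply (sides_st (Pair r0 r1)); auto using st_pair_r).
    destruct (classic (domfree dom (Pair r0 r1))) as [Hf|Hnf];
      [apply nsub_closed; auto using adm_pair|].
    change (interp (Pair (nsub r0) (nsub r1)) = interp (reify (mval (Pair r0 r1)))).
    rewrite interp_pair, IH0, IH1, mval_pair, reify_vpair; auto.
    exists (Pair r0 r1); split; [apply skeleton_intro; auto|apply mval_pair].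
  - assert (S0 : In r0 sides) by (apply (sides_st (Enc r0 r1)); auto using st_enc_l).
    assert (S1 : In r1 sides) by (apply (sides_st (Enc r0 r1)); auto using st_enc_r).
    destruct (classic (domfree dom (Enc r0 r1))) as [Hf|Hnf];
      [apply nsub_closed; auto using adm_enc|].
    destruct (msub_wf _ Hs) as [_ Hk'].
    assert (R1 : represented (mval r1)) by (apply key_represented; auto).
    change (interp (Enc (nsub r0) (nsub r1)) = interp (reify (mval (Enc r0 r1)))).
    rewrite interp_enc, IH0, IH1, (reify_represented _ R1), mval_enc, reify_venc;
      auto using nsub_dy, msub_dy.
    exists (Enc r0 r1); split; [apply skeleton_intro; auto|apply mval_enc; auto using msub_dy].
Qed.

Lemma nsub_eqd : EQ (msub tl) (msub tr) -> EQ (nsub tl) (nsub tr).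
Proof.
  intros Heq; apply interp_faithful; auto using nsub_dy, sides_l, sides_r.
  rewrite !nsub_interp by auto using sides_l, sides_r.
  unfold mval; rewrite (interp_sound _ _ Heq); reflexivity.
Qed.

Definition traceable (s : term) : Prop :=
  In s U \/ (exists y, In y dom /\ kept y /\ mu y = s) \/
  (exists r, In r skeleton /\ reify (mval r) = s).

Lemma key_traceable k : In k sides -> is_key (msub k) -> traceable (msub k).
Proof.
  intros Hs Hk; destruct (domfree_or_var dom k) as [Hf|[y [Hy Hyd]]].
  - left; rewrite subst_on_domfree; auto.
  - destruct k as [n| | |]; try contradiction; destruct Hy as [<-|[]].
    rewrite subst_on_var in * by auto; right; left; exists n; repeat split; auto using key_atom.
Qed.

Lemma st_representative v s : In s (st (representative v)) -> traceable s.
Proof.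
  intros Hs; destruct (anchors_cases _ (representative_in v)) as [Hb|[y [Hy [[Ha Hys] Hm]]]].
  - left; apply (U_st_closed (representative v)); [apply in_base, Hb|exact Hs].
  - rewrite <- Hm, st_atom in Hs by auto; destruct Hs as [<-|[]].
    right; left; exists y; repeat split; auto.
Qed.

Lemma st_reify v s : In s (st (reify v)) -> traceable s.
Proof.
  assert (Hc0 : forall s', In s' (st c0) -> traceable s').
  { intros s' Hs; left; apply (U_st_closed c0); [apply in_base, c0_base|exact Hs]. }
  revert s; induction v as [t|t|v0 IH0 v1 IH1|v0 IH0 v1 IH1]; intros s Hs.
  all: rewrite reify_unfold in Hs.
  all: destruct (dec (represented _)) eqn:Hrep; [eapply st_representative, Hs|].
  1,2: apply Hc0, Hs.
  - destruct (find _ skeleton) as [r|] eqn:Hf; [|apply Hc0, Hs].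
    destruct Hs as [<-|Hs]; [|apply in_app_iff in Hs; destruct Hs; auto].
    pose proof Hf as Hf'; apply find_some in Hf'; rewrite dec_spec in Hf'; destruct Hf' as [Hr Hv].
    right; right; exists r; split; auto; rewrite Hv, reify_unfold, Hrep, Hf; reflexivity.
  - destruct (find _ skeleton) as [[| | |a k]|] eqn:Hf; try (apply Hc0, Hs).
    pose proof Hf as Hf'; apply find_some in Hf'; rewrite dec_spec in Hf'; destruct Hf' as [Hr Hv].
    destruct Hs as [<-|Hs].
    + right; right; exists (Enc a k); split; auto; rewrite Hv, reify_unfold, Hrep, Hf; reflexivity.
    + destruct (skeleton_enc _ _ Hr) as [Hks [_ [Hkey _]]].
      apply in_app_iff in Hs; destruct Hs as [Hs|Hs]; auto.
      rewrite st_atom in Hs by (apply key_atom, Hkey); destruct Hs as [<-|[]].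
      apply key_traceable; auto.
Qed.

Lemma st_nu x s : In x dom -> In s (st (nu x)) -> traceable s.
Proof.
  intros Hx; unfold nu; destruct (dec (kept x)) eqn:Hk; [|apply st_reify].
  rewrite dec_spec in Hk; destruct Hk as [Ha Hs'].
  rewrite st_atom by auto; intros [<-|[]]; right; left; exists x; repeat split; auto.
Qed.

Lemma nu_domfree x : In x dom -> domfree dom (nu x).
Proof.
  intros Hx y Hy Hyd; apply (dom_fresh y Hyd).
  eapply dy_vars; [apply nu_dy_wf, Hx|exact Hy].
Qed.

(* Each traceable term is traced back to a subterm of [S], [A] or [alpha]; on
   [dom]-free terms this is injective, as [untrace] recovers the term. *)
Definition trace (s : term) : term :=
  if dec (In s U) then s else
  match find (fun y => dec (kept y /\ mu y = s)) dom with
  | Some y => Var y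
  | None => match find (fun r => dec (reify (mval r) = s)) skeleton with
            | Some r => r
            | None => s
            end
  end.

Definition untrace (z : term) : term :=
  match z with Var y => mu y | _ => reify (mval z) end.

Lemma trace_in_U s : traceable s -> In (trace s) U.
Proof.
  intros Hs; unfold trace; destruct (dec (In s U)) eqn:HU; [rewrite dec_spec in HU; exact HU|].
  destruct (find _ dom) as [y|] eqn:Hf.
  { apply find_some in Hf; rewrite dec_spec in Hf; destruct Hf as [_ [[_ Hy] _]]; auto. }
  destruct (find _ skeleton) as [r|] eqn:Hf2.
  { apply find_some in Hf2; destruct Hf2 as [Hr _]; apply sides_in_U, skeleton_spec, Hr. }
  exfalso; destruct Hs as [Hs|[[y [Hy Hm]]|[r [Hr Hg]]]].
  - rewrite (proj2 (dec_spec _) Hs) in HU; discriminate.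
  - eapply find_none in Hf; [|exact Hy]; rewrite (proj2 (dec_spec _) Hm) in Hf; discriminate.
  - eapply find_none in Hf2; [|exact Hr]; rewrite (proj2 (dec_spec _) Hg) in Hf2; discriminate.
Qed.

Lemma trace_cases s : trace s = s \/ (~ domfree dom (trace s) /\ untrace (trace s) = s).
Proof.
  unfold trace; destruct (dec (In s U)); auto.
  destruct (find _ dom) as [y|] eqn:Hf.
  { apply find_some in Hf; rewrite dec_spec in Hf; destruct Hf as [Hy [_ Hm]].
    right; split; auto; intros Hd; apply (Hd y); simpl; auto. }
  destruct (find _ skeleton) as [r|] eqn:Hf2; auto.
  apply find_some in Hf2; rewrite dec_spec in Hf2; destruct Hf2 as [Hr Hg].
  destruct (skeleton_spec _ Hr) as [_ [Ha [Hd _]]]; right; split; auto.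
  destruct r; simpl in Ha; try discriminate; exact Hg.
Qed.

Lemma trace_inj s s' : domfree dom s -> domfree dom s' -> trace s = trace s' -> s = s'.
Proof.
  intros Hs Hs' He.
  destruct (trace_cases s) as [E1|[N1 E1]], (trace_cases s') as [E2|[N2 E2]]; congruence.
Qed.

Lemma card_st_nu x : In x dom -> card (st (nu x)) <= card U.
Proof.
  intros Hx; unfold card.
  rewrite <- (length_map trace); apply NoDup_incl_length.
  - apply NoDup_map_NoDup_ForallPairs; [|apply NoDup_nodup].
    intros a b Ha Hb; apply nodup_In in Ha, Hb.
    apply trace_inj; eapply domfree_st; eauto using nu_domfree.
  - intros z Hz; apply in_map_iff in Hz; destruct Hz as [s [<- Hs]].
    apply nodup_In, trace_in_U; apply nodup_In in Hs; eapply st_nu; eauto.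
Qed.

End SmallWitness.

Lemma small_witness_exists dom mu tl tr :
  (forall y, In y dom -> ~ In y (flat_map vars T)) ->
  (forall x, In x dom -> DY (mu x)) ->
  (forall s, In s (st tl ++ st tr) -> In s U) ->
  wf tl -> wf tr -> vars_abstractable T dom tl -> vars_abstractable T dom tr ->
  wf (subst_on dom mu tl) -> wf (subst_on dom mu tr) ->
  (exists c, In c U /\ DY c) ->
  EQ (subst_on dom mu tl) (subst_on dom mu tr) ->
  exists nu, (forall x, In x dom -> DY (nu x) /\ wf (nu x)) /\
    wf (subst_on dom nu tl) /\ wf (subst_on dom nu tr) /\
    EQ (subst_on dom nu tl) (subst_on dom nu tr) /\
    (forall x, In x dom -> card (st (nu x)) <= card U).
Proof.
  intros Hfresh Hmu HU Wl Wr Pl Pr Wml Wmr [c Hc] Heq; apply in_base in Hc.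
  destruct (eqd_constructible _ _ Heq) as [Cl Cr].
  assert (Hl : admissible T dom tl).
  { apply admissible_of_abstractable; auto; intros Hf.
    rewrite subst_on_domfree in Cl by auto; apply constructible_dy; auto. }
  assert (Hr : admissible T dom tr).
  { apply admissible_of_abstractable; auto; intros Hf.
    rewrite subst_on_domfree in Cr by auto; apply constructible_dy; auto. }
  exists (nu dom mu tl tr c); repeat split.
  all: intros; try apply nu_dy_wf; auto.
  - apply nsub_wf; auto using sides_l.
  - apply nsub_wf; auto using sides_r.
  - apply nsub_eqd; auto.
  - apply card_st_nu; auto.
Qed.
End TermModel. End Signature.

Definition universe (S : list term) (B : list assertion) : list term :=
  flat_map st S ++ flat_map sta B.

Lemma universe_st_closed S B s s' : In s (universe S B) -> In s' (st s) -> In s' (universe S B).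
Proof.
  unfold universe, sta; rewrite !in_app_iff, !in_flat_map; intros [[z [Hz Hs]]|[z [Hz Hs]]] Hs'.
  - left; exists z; split; auto; eapply st_trans; eauto.
  - right; exists z; split; auto; rewrite in_app_iff in *.
    destruct Hs; [left|right]; eapply st_trans; eauto.
Qed.

Lemma universe_sides S B b s : In b B -> In s (st (lhs b) ++ st (rhs b)) -> In s (universe S B).
Proof. intros Hb Hs; apply in_or_app; right; apply in_flat_map; eauto. Qed.

Lemma universe_wf iskey S B : (forall s, In s S -> wf iskey s) ->
  (forall b, In b B -> wf iskey (lhs b) /\ wf iskey (rhs b)) ->
  forall s, In s (universe S B) -> wf iskey s.
Proof.
  intros HS HB s; unfold universe, sta; rewrite in_app_iff, !in_flat_map.
  intros [[z [Hz Hs]]|[z [Hz Hs]]]; [apply (wf_st iskey z s); auto|].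
  destruct (HB z Hz); apply in_app_iff in Hs.
  destruct Hs; [apply (wf_st iskey (lhs z))|apply (wf_st iskey (rhs z))]; auto.
Qed.

Lemma kerT_universe S A B s : In s (kerT S A) -> In s (universe S B) \/ is_atom s = true.
Proof.
  unfold kerT; rewrite in_app_iff, in_map_iff; intros [Hs|[n [<- _]]]; auto.
  left; apply in_or_app; left; apply in_flat_map; eauto using st_refl.
Qed.

Lemma kerT_fresh S A y :
  ~ In y (flat_map vars S) -> ~ In y (flat_map avars A) -> ~ In y (flat_map vars (kerT S A)).
Proof.
  intros HS HA; unfold kerT; rewrite flat_map_app, in_app_iff; intros [H|H]; [contradiction|].
  apply in_flat_map in H; destruct H as [z [Hz Hy]]; apply in_map_iff in Hz.
  destruct Hz as [w [<- Hw]]; destruct Hy as [<-|[]]; apply HA.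
  apply in_flat_map in Hw; destruct Hw as [b [Hb Hyb]].
  apply in_flat_map; exists b; split; auto; apply in_or_app; auto.
Qed.

Lemma kerT_dy_of_pubs qv iskey kinv S A b l : In b A -> wf iskey l ->
  (forall s, In s (pubs_t qv l) -> In s S) ->
  (forall y, In y (vars l) -> qv y = true -> In y (bnd b)) ->
  dy iskey kinv (kerT S A) l.
Proof.
  intros Hb; induction l as [n|n|l0 IH0 l1 IH1|l0 IH0 l1 IH1]; intros Hw Hp Hq;
    match goal with |- dy _ _ _ ?t => destruct (has_qvar qv t) eqn:Hh end;
    simpl in Hp; rewrite ?Hh in Hp;
    try (apply dy_ax, in_or_app; left; apply Hp; simpl; auto; fail);
    try discriminate Hh.
  - apply dy_ax, in_or_app; right; apply in_map, in_flat_map; exists b; split; auto.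
    apply Hq; simpl; auto; unfold has_qvar in Hh; simpl in Hh; rewrite orb_false_r in Hh; auto.
  - destruct Hw; apply dy_pair; [apply IH0|apply IH1]; auto;
      intros; [apply Hp|apply Hq|apply Hp|apply Hq]; simpl; rewrite ?in_app_iff; auto.
  - destruct Hw as [Hw Hk]; apply dy_enc; auto; [apply IH0|apply IH1]; auto using key_wf;
      intros; [apply Hp|apply Hq|apply Hp|apply Hq]; simpl; rewrite ?in_app_iff; auto.
Qed.

Lemma kerE_dy qv iskey kinv S A a c :
  sanitized qv S A -> (forall b, In b A -> wf_assertion qv iskey b) ->
  In (a, c) (kerE A) -> dy iskey kinv (kerT S A) a /\ dy iskey kinv (kerT S A) c.
Proof.
  intros [_ [Hfree Hpubs]] HwfA Hac; unfold kerE in Hac; apply in_map_iff in Hac.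
  destruct Hac as [b [Hbe Hb]]; injection Hbe; intros <- <-.
  destruct (HwfA b Hb) as [_ [Wl [Wr _]]].
  assert (Hq : forall y, In y (vars (lhs b) ++ vars (rhs b)) -> qv y = true -> In y (bnd b)).
  { intros y Hy Hqy; destruct (in_dec Nat.eq_dec y (bnd b)) as [|Hn]; auto.
    assert (Hf : In y (fva b)).
    { unfold fva; apply filter_In; split; auto; destruct (in_dec Nat.eq_dec y (bnd b)); tauto. }
    rewrite (Hfree b y Hb Hf) in Hqy; discriminate. }
  split; apply (kerT_dy_of_pubs qv iskey kinv S A b); auto; intros.
  all: try (apply Hq; auto; apply in_or_app; auto).
  all: apply (Hpubs b); auto; apply in_or_app; auto.
Qed.

Lemma kerT_dy_universe iskey kinv S A B s :
  (forall b, In b A -> dy iskey kinv (kerT S A) (lhs b)) -> dy iskey kinv (kerT S A) s ->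
  exists c, In c (universe S (A ++ B)) /\ dy iskey kinv (kerT S A) c.
Proof.
  intros HA Hs; destruct S as [|s0 S], A as [|b0 A]; [exfalso; apply (dy_nil _ _ s Hs)|..].
  1: exists (lhs b0); split; [apply (universe_sides _ _ b0); simpl; auto using in_or_app, st_refl|].
  1: apply HA; simpl; auto.
  all: exists s0; split; [apply in_or_app; left; simpl; auto using in_or_app, st_refl|].
  all: apply dy_ax; simpl; auto.
Qed.

Lemma kerE_universe S A B a c :
  In (a, c) (kerE A) -> In a (universe S (A ++ B)) /\ In c (universe S (A ++ B)).
Proof.
  unfold kerE; rewrite in_map_iff; intros [b [Hbe Hb]]; injection Hbe; intros <- <-.
  split; apply (universe_sides _ _ b); auto using in_or_app, st_refl.
Qed.

Theorem theorem2
  (qv iskey : nat -> bool) (kinv : nat -> nat)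
  (Hkeys : forall n, iskey n = true -> iskey (kinv n) = true /\ kinv (kinv n) = n)
  (S : list term) (A : list assertion) (alpha : assertion)
  (HwfS : forall s, In s S -> wf iskey s)
  (HwfA : forall b, In b (alpha :: A) -> wf_assertion qv iskey b)
  (Hsan : sanitized qv S A)
  (Hcons : consistent iskey (kerE A))
  (Hdisj : forall x, In x (bnd alpha) ->
             ~ In x (flat_map vars S) /\ ~ In x (flat_map avars A))
  (mu : nat -> term)
  (Hmu : good_witness iskey kinv S A alpha mu) :
  exists nu : nat -> term,
    good_witness iskey kinv S A alpha nu /\
    (forall x, In x (bnd alpha) -> card (st (nu x)) <= bound_M S A alpha).
Proof.
  destruct (list_eq_dec Nat.eq_dec (bnd alpha) []) as [Hnil|Hne].
  { exists mu; split; auto; rewrite Hnil; intros x []. }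
  destruct Hmu as (_ & Wml & Wmr & Hmud & Habs & Heq), Hcons as [lam [_ Hlam]].
  assert (HA : forall b, In b A -> wf_assertion qv iskey b) by (intros; apply HwfA; right; auto).
  assert (HE : forall a c, In (a, c) (kerE A) ->
                 dy iskey kinv (kerT S A) a /\ dy iskey kinv (kerT S A) c)
    by (intros; eapply kerE_dy; eauto).
  destruct (HwfA alpha) as (_ & Wl & Wr & _); [left; auto|].
  edestruct (small_witness_exists iskey kinv (kerT S A) (kerE A) (universe S (A ++ [alpha])) lam)
    with (dom := bnd alpha) (mu := mu) (tl := lhs alpha) (tr := rhs alpha)
    as (nu & Hnu & Wnl & Wnr & Hnq & Hcard); auto.
  - apply universe_st_closed.
  - apply universe_wf; auto; intros b Hb; apply in_app_iff in Hb.
    destruct Hb as [Hb|[<-|[]]]; [destruct (HA b Hb) as (_ & ? & ? & _)|]; auto.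
  - intros a c Hac; destruct (kerE_universe S A [alpha] a c Hac), (HE a c Hac); auto.
  - intros a c Hac; apply Hlam, Hac.
  - intros s; apply kerT_universe.
  - intros y Hy; apply kerT_fresh; apply Hdisj, Hy.
  - intros s Hs; apply (universe_sides _ _ alpha); auto; apply in_or_app; simpl; auto.
  - intros x p Hx Hp; apply (Habs x); auto.
  - intros x p Hx Hp; apply (Habs x); auto.
  - destruct (bnd alpha) as [|x0 dom]; [contradiction|].
    apply (kerT_dy_universe iskey kinv S A [alpha] (mu x0)); [|apply Hmud; left; auto].
    intros b Hb; apply (HE (lhs b) (rhs b)), (in_map (fun b => (lhs b, rhs b))), Hb.
  - exists nu; refine (conj (conj _ (conj Wnl (conj Wnr (conj _ (conj Habs Hnq))))) Hcard).
    all: intros x Hx; apply Hnu, Hx.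
Qed.
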